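(* Let $R$ be an integral domain and $Q$ a quandle. Then: (1) The extended quandle ring $R^{\circ}[Q]$ contains zero-divisors. (2) If $Q$ contains a trivial subquandle with more than one element, then $R[Q]$ contains zero-divisors. (3) If $Q$ is inert, then $R[Q]$ contains zero-divisors. In particular, if $Q$ contains a finite subquandle with more than one element, then $R[Q]$ contains zero-divisors. (4) If $Q$ is not semi-latin, then $R[Q]$ contains zero-divisors.
   Context: A quandle is a non-empty set $Q$ with a binary operation $(x,y)\mapsto xy$ such that $xx=x$ for all $x$; for all $x,y$ there is a unique $z$ with $x=zy$; and $(xy)z=(xz)(yz)$ for all $x,y,z$. A subquandle is a subset closed under the operation which is a quandle with it. A quandle is trivial if $xy=x$ for all $x,y$. The quandle ring $R[Q]$ is the free $R$-module with basis $Q$, with multiplication $\big(\sum_i\alpha_i x_i\big)\big(\sum_j\beta_j x_j\big)=\sum_{i,j}\alpha_i\beta_j (x_ix_j)$ (in general non-associative). The extended quandle ring is $R^{\circ}[Q]=R[Q]\oplus Re$, where $e$ is a symbol not in $Q$ acting as a two-sided identity: $eu=u=ue$ for $u\in R[Q]$ and $ee=e$. A zero-divisor in a ring is a non-zero element $u$ for which there exists a non-zero $v$ with $uv=0$ or $vu=0$. A quandle $Q$ with more than one element is inert if there exist a finite subset $A=\{a_1,\dots,a_n\}\subseteq Q$ and two distinct elements $x,y\in Q$ such that $Ax=Ay$, where $Az=\{a_1z,\dots,a_nz\}$. A quandle is semi-latin if for each $x\in Q$ the map $L_x:Q\to Q$, $L_x(y)=xy$, is injective. *)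

From HB Require Import structures.
From mathcomp Require Import all_boot all_order all_algebra.
From mathcomp Require Import finmap.
Set Implicit Arguments. Unset Strict Implicit. Unset Printing Implicit Defensive.
Import GRing.Theory.
Local Open Scope ring_scope.
Local Open Scope fset_scope.

(* A quandle: a (non-empty) set Q with a binary operation op (op x y = "xy"). *)
Definition is_quandle (Q : Type) (op : Q -> Q -> Q) : Prop :=
  inhabited Q /\
  (forall x, op x x = x) /\
  (forall x y, exists z, x = op z y /\ forall z', x = op z' y -> z' = z) /\
  (forall x y z, op (op x y) z = op (op x z) (op y z)).

(* S is a subquandle: non-empty, closed under op, and a quandle with the
   restricted operation (idempotence, distributivity and uniqueness of the
   right division are inherited; existence must happen inside S). *)
Definition is_subquandle (Q : eqType) (op : Q -> Q -> Q) (S : pred Q) : Prop :=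
  (exists x, x \in S) /\
  (forall x y, x \in S -> y \in S -> op x y \in S) /\
  (forall x y, x \in S -> y \in S -> exists2 z, z \in S & x = op z y).

Definition trivial_on (Q : eqType) (op : Q -> Q -> Q) (S : pred Q) : Prop :=
  forall x y, x \in S -> y \in S -> op x y = x.

Definition finite_pred (Q : eqType) (S : pred Q) : Prop :=
  exists s : seq Q, forall x, x \in S -> x \in s.

Definition has_two_elements (Q : eqType) (S : pred Q) : Prop :=
  exists x y, [/\ x \in S, y \in S & x != y].

Definition inert (Q : choiceType) (op : Q -> Q -> Q) : Prop :=
  (exists x y : Q, x != y) /\
  exists (A : {fset Q}) (x y : Q),
    [/\ A != fset0, x != y & [fset op a x | a in A] = [fset op a y | a in A]].

Definition semi_latin (Q : Type) (op : Q -> Q -> Q) : Prop :=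
  forall x, injective (op x).

Notation qring Q R := {fsfun Q -> R with 0}.

Definition qr_mul (R : idomainType) (Q : choiceType) (op : Q -> Q -> Q)
    (u v : qring Q R) (z : Q) : R :=
  \sum_(x <- finsupp u) \sum_(y <- finsupp v | op x y == z) u x * v y.

Definition qr_nonzero (R : idomainType) (Q : choiceType) (u : qring Q R) : Prop :=
  exists x, u x != 0.

Definition qr_zero_divisor (R : idomainType) (Q : choiceType) (op : Q -> Q -> Q)
    (u : qring Q R) : Prop :=
  qr_nonzero u /\
  exists v : qring Q R, qr_nonzero v /\
    ((forall z, qr_mul op u v z = 0) \/ (forall z, qr_mul op v u z = 0)).

Definition qr_has_zero_divisors (R : idomainType) (Q : choiceType)
    (op : Q -> Q -> Q) : Prop :=
  exists u : qring Q R, qr_zero_divisor op u.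

(* Extended quandle ring R°[Q] = R[Q] (+) R e: pairs (u, a) meaning u + a e. *)
Definition eqring (Q : choiceType) (R : idomainType) := (qring Q R * R)%type.

(* (u + a e)(v + b e) = uv + a v + b u + ab e; result given by coefficients. *)
Definition eqr_mul (R : idomainType) (Q : choiceType) (op : Q -> Q -> Q)
    (p q : eqring Q R) : (Q -> R) * R :=
  (fun z => (qr_mul op p.1 q.1 z + p.2 * q.1 z + q.2 * p.1 z)%R, (p.2 * q.2)%R).

Definition eqr_nonzero (R : idomainType) (Q : choiceType) (p : eqring Q R) : Prop :=
  qr_nonzero p.1 \/ p.2 != 0.

Definition eqr_is_zero (R : idomainType) (Q : Type) (w : (Q -> R) * R) : Prop :=
  (forall z, w.1 z = 0) /\ w.2 = 0.

Definition eqr_zero_divisor (R : idomainType) (Q : choiceType) (op : Q -> Q -> Q)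
    (p : eqring Q R) : Prop :=
  eqr_nonzero p /\
  exists q : eqring Q R, eqr_nonzero q /\
    (eqr_is_zero (eqr_mul op p q) \/ eqr_is_zero (eqr_mul op q p)).

Definition eqr_has_zero_divisors (R : idomainType) (Q : choiceType)
    (op : Q -> Q -> Q) : Prop :=
  exists p : eqring Q R, eqr_zero_divisor op p.

From HB Require Import structures.
From mathcomp Require Import all_boot all_order all_algebra.
From mathcomp Require Import finmap.
From Stdlib Require Import Classical.
Set Implicit Arguments. Unset Strict Implicit. Unset Printing Implicit Defensive.
Import GRing.Theory.
Local Open Scope ring_scope.
Local Open Scope fset_scope.

(* Idea: in R°[Q] an idempotent w gives (w - e) w = w - w = 0.  In R[Q], if
   a non-empty finite A satisfies A x = A y with x <> y, then
   (sum_(a in A) a) (x - y) = sum_(a in A) a x - sum_(a in A) a y = 0, the two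
   sums having the same terms because right multiplication is injective in a
   quandle.  The remaining hypotheses each produce such an A: a singleton {w}
   when w x = w y (trivial subquandles, failure of semi-latinity), or the
   finite subquandle itself, which is mapped onto itself by every right
   multiplication by its elements. *)

Lemma quandle_rmul_inj (Q : Type) (op : Q -> Q -> Q) :
  is_quandle op -> forall x, injective (op^~ x).
Proof.
case=> _ [_ [rdiv _]] x a b eab.
have [z [_ uniq_z]] := rdiv (op a x) x.
by rewrite (uniq_z a erefl) (uniq_z b eab).
Qed.

Lemma sum_indicator_fset (R : pzSemiRingType) (Q : choiceType)
    (B : {fset Q}) (z : Q) :
  \sum_(b <- B) ((b == z)%:R : R) = (z \in B)%:R.
Proof.
have [zB|zNB] := boolP (z \in B); last first.
  by rewrite big1_fset // => b bB _; case: eqP bB zNB => // ->->.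
rewrite (big_fsetD1 z) //= eqxx big1_fset ?addr0 // => b.
by rewrite !inE => /andP[/negPf-> _].
Qed.

Lemma sum_indicator_imfset (R : pzSemiRingType) (Q : choiceType)
    (f : Q -> Q) (A : {fset Q}) (z : Q) :
  injective f ->
  \sum_(a <- A) ((f a == z)%:R : R) = (z \in [fset f a | a in A])%:R.
Proof.
by move=> f_inj; rewrite -sum_indicator_fset big_imfset //= => a b _ _ /f_inj.
Qed.

Section QuandleRing.
Variables (R : idomainType) (Q : choiceType) (op : Q -> Q -> Q).

Lemma qr_mul_fsfunE (S T : {fset Q}) (f g : Q -> R) (z : Q) :
  qr_mul op [fsfun a in S => f a] [fsfun b in T => g b] z
  = \sum_(a <- S) \sum_(b <- T | op a b == z) f a * g b.
Proof.
have supp_sub (U : {fset Q}) (h : Q -> R) :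
    finsupp ([fsfun a in U => h a] : qring Q R) `<=` U.
  exact: finsupp_sub.
rewrite /qr_mul (big_fset_incl _ (supp_sub S f)); last first.
  move=> a _; rewrite mem_finsupp negbK => /eqP ua0.
  by rewrite big1 // => b _; rewrite ua0 mul0r.
apply: eq_fbigr => a aS _; rewrite fsfunE aS !(big_mkcond (fun b => op a b == z)).
rewrite (big_fset_incl _ (supp_sub T g)); last first.
  by move=> b _; rewrite mem_finsupp negbK => /eqP->; rewrite mulr0 if_same.
by apply: eq_fbigr => b bT _; rewrite fsfunE bT.
Qed.

Lemma eqr_has_zero_divisors_of_idem (w : Q) :
  op w w = w -> eqr_has_zero_divisors R op.
Proof.
move=> idem_w; pose u : qring Q R := [fsfun a in [fset w] => 1].
have u_nz : qr_nonzero u by exists w; rewrite fsfunE fset11 oner_neq0.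
exists (u, -1); split; first by left.
exists (u, 0); split; first by left.
left; split => [z|]; last exact: mulr0.
change (qr_mul op u u z + -1 * u z + 0 * u z = 0)%R.
rewrite qr_mul_fsfunE !big_seq_fset1 fsfunE inE big_mkcond big_seq_fset1.
by rewrite idem_w eq_sym mul1r mul0r addr0; case: eqP; rewrite ?mulN1r ?subrr ?mulr0 ?addr0.
Qed.

Hypothesis rmul_inj : forall x, injective (op^~ x).

Lemma qr_has_zero_divisors_of_eq_translates (A : {fset Q}) (x y : Q) :
  A != fset0 -> x != y -> [fset op a x | a in A] = [fset op a y | a in A] ->
  qr_has_zero_divisors R op.
Proof.
move=> /fset0Pn[w wA] neq_xy eq_Axy.
pose u : qring Q R := [fsfun a in A => 1].
pose v : qring Q R := [fsfun b in [fset x; y] => if b == x then 1 else -1].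
exists u; split; first by exists w; rewrite fsfunE wA oner_neq0.
exists v; split; first by exists x; rewrite fsfunE !inE eqxx oner_neq0.
left => z; rewrite qr_mul_fsfunE.
have y_notin_x : y \notin [fset x] by rewrite inE eq_sym.
transitivity (\sum_(a <- A) ((op a x == z)%:R - (op a y == z)%:R : R)).
  apply: eq_fbigr => a _ _; rewrite big_mkcond fsetUC big_fsetU1 //=.
  rewrite big_seq_fset1 eqxx [y == x]eq_sym (negbTE neq_xy) !mul1r addrC.
  by case: (op a x == z); case: (op a y == z); rewrite /= ?addr0 ?add0r ?subr0 ?sub0r ?oppr0.
by rewrite sumrB !sum_indicator_imfset // eq_Axy subrr.
Qed.

Lemma inert_qr_has_zero_divisors : inert op -> qr_has_zero_divisors R op.
Proof.
case=> _ [A [x [y [A_nz neq_xy eq_Axy]]]].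
exact: qr_has_zero_divisors_of_eq_translates eq_Axy.
Qed.

End QuandleRing.

Section Inertness.
Variables (Q : choiceType) (op : Q -> Q -> Q).

Lemma inert_of_lmul_collision (w x y : Q) :
  x != y -> op w x = op w y -> inert op.
Proof.
move=> neq_xy eq_wxy; split; first by exists x, y.
exists [fset w], x, y; split => //; last by rewrite !imfset_fset1 eq_wxy.
by apply/fset0Pn; exists w; rewrite inE.
Qed.

Lemma not_semi_latin_inert : ~ semi_latin op -> inert op.
Proof.
move=> /not_all_ex_not[w w_ninj].
have [x [y [eq_wxy neq_xy]]] : exists x y, op w x = op w y /\ x != y.
  apply: NNPP => no_pair; apply: w_ninj => x y eq_wxy.
  by apply/eqP/(contra_notT _ no_pair) => neq_xy; exists x, y.
exact: inert_of_lmul_collision neq_xy eq_wxy.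
Qed.

Lemma trivial_subset_inert (S : pred Q) :
  trivial_on op S -> has_two_elements S -> inert op.
Proof.
move=> triv [x [y [xS yS neq_xy]]].
by apply: (inert_of_lmul_collision (w := x) neq_xy); rewrite !triv.
Qed.

Lemma finite_subquandle_inert (S : pred Q) :
  is_subquandle op S -> finite_pred S -> has_two_elements S -> inert op.
Proof.
move=> [_ [closed_S rdiv_S]] [s s_cover] [x [y [xS yS neq_xy]]].
pose A := [fset a | a in s & a \in S].
have inA a : (a \in A) = (a \in S).
  by rewrite !inE /=; apply/andP/idP => [[]|aS] //; split => //; apply: s_cover.
have translate_A b : b \in S -> [fset op a b | a in A] = A.
  move=> bS; apply/fsetP => c; rewrite inA; apply/imfsetP/idP.
    by case=> a /=; rewrite inA => aS ->; apply: closed_S.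
  by move=> cS; have [d dS ->] := rdiv_S c b cS bS; exists d; rewrite //= inA.
split; first by exists x, y.
exists A, x, y; split; rewrite ?translate_A //.
by apply/fset0Pn; exists x; rewrite inA.
Qed.

End Inertness.

Theorem proposition3p1 (R : idomainType) (Q : choiceType) (op : Q -> Q -> Q)
    (hQ : is_quandle op) :
  [/\ eqr_has_zero_divisors R op,
      (exists S : pred Q,
          [/\ is_subquandle op S, trivial_on op S & has_two_elements S]) ->
        qr_has_zero_divisors R op,
      (inert op -> qr_has_zero_divisors R op) /\
      ((exists S : pred Q,
          [/\ is_subquandle op S, finite_pred S & has_two_elements S]) ->
        qr_has_zero_divisors R op)
    & ~ semi_latin op -> qr_has_zero_divisors R op].
Proof.
have zero_div := inert_qr_has_zero_divisors R (quandle_rmul_inj hQ).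
have [[w] [idem _]] := hQ.
split.
- exact: eqr_has_zero_divisors_of_idem (idem w).
- by case=> S [_ triv two]; apply/zero_div/(trivial_subset_inert triv two).
- split=> [|[S [subQ fin two]]]; first exact: zero_div.
  exact/zero_div/(finite_subquandle_inert subQ fin two).
- by move/not_semi_latin_inert/zero_div.
Qed.
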